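(* Let $G$ be an infinite group that satisfies a non-trivial mixed identity $w \in G \ast \mathbb{Z}$ of length $k$. Then exactly one of the following holds: (1) there exists a set $\Omega$ and an injective homomorphism $G \to \mathrm{Sym}(\Omega)$ whose image contains $\mathrm{Alt}_f(\Omega)$; (2) $td(G) < k$.
   Context: Let $t$ be a generator of $\mathbb{Z}$. For $w \in G \ast \mathbb{Z}$, $G$ satisfies the mixed identity $w = 1$ if every homomorphism $G \ast \mathbb{Z} \to G$ that restricts to the identity on $G$ sends $w$ to $1$; the mixed identity is non-trivial if $w \neq 1$ in $G \ast \mathbb{Z}$. The length of $w$ is its word length with respect to the generating set $G \cup \{t^{\pm 1}\}$. For an infinite set $\Omega$, $\mathrm{Sym}_f(\Omega)$ is the group of finitely supported permutations of $\Omega$ and $\mathrm{Alt}_f(\Omega)$ its alternating subgroup. The transitivity degree $td(G)$ is the supremum of all $k$ such that $G$ admits a faithful action on some set that is transitive on ordered $k$-tuples of distinct elements. *)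

From Stdlib Require Import List Arith.
Import ListNotations.

Record Group := {
  gcar :> Type;
  gmul : gcar -> gcar -> gcar;
  gone : gcar;
  ginv : gcar -> gcar;
  gmulA : forall x y z, gmul x (gmul y z) = gmul (gmul x y) z;
  gmul1l : forall x, gmul gone x = x;
  gmul1r : forall x, gmul x gone = x;
  gmulVl : forall x, gmul (ginv x) x = gone;
  gmulVr : forall x, gmul x (ginv x) = gone
}.

Definition finite_type (T : Type) : Prop := exists l : list T, forall x, In x l.
Definition infinite_type (T : Type) : Prop := ~ finite_type T.

Section FreeProduct.
Variable G : Group.

(* Letters of words over the generating set G ∪ {t, t^-1}:
   inl g is the element g of G, inr true is t, inr false is t^-1. *)
Definition letter := (gcar G + bool)%type.
Definition word := list letter.

(* Elements of G * Z are words modulo the congruence generated by the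
   multiplication table of G (and 1 = empty word) and t t^-1 = t^-1 t = 1. *)
Inductive wequiv : word -> word -> Prop :=
| wequiv_refl u : wequiv u u
| wequiv_sym u v : wequiv u v -> wequiv v u
| wequiv_trans u v x : wequiv u v -> wequiv v x -> wequiv u x
| wequiv_mul u v (g h : gcar G) :
    wequiv (u ++ [inl g; inl h] ++ v) (u ++ [inl (gmul G g h)] ++ v)
| wequiv_one u v : wequiv (u ++ [inl (gone G)] ++ v) (u ++ v)
| wequiv_tt u v (b : bool) : wequiv (u ++ [inr b; inr (negb b)] ++ v) (u ++ v).

(* The image of a word under the homomorphism G * Z -> G which is the
   identity on G and sends t to tau. *)
Definition eval_letter (tau : gcar G) (a : letter) : gcar G :=
  match a with
  | inl g => g
  | inr true => tau
  | inr false => ginv G tau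
  end.

Fixpoint eval_word (tau : gcar G) (w : word) : gcar G :=
  match w with
  | [] => gone G
  | a :: w' => gmul G (eval_letter tau a) (eval_word tau w')
  end.

Definition mixed_identity (w : word) : Prop :=
  forall tau : gcar G, eval_word tau w = gone G.

Definition nontrivial (w : word) : Prop := ~ wequiv w [].

Definition word_length (w : word) (k : nat) : Prop :=
  (exists u, wequiv w u /\ length u = k) /\
  (forall u, wequiv w u -> k <= length u).

(* Left actions of G on a type Omega (= homomorphisms G -> Sym(Omega)). *)
Definition is_action (Omega : Type) (act : gcar G -> Omega -> Omega) : Prop :=
  (forall x, act (gone G) x = x) /\
  (forall g h x, act (gmul G g h) x = act g (act h x)).

Definition faithful (Omega : Type) (act : gcar G -> Omega -> Omega) : Prop :=
  forall g h, (forall x, act g x = act h x) -> g = h.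

Definition distinct_tuple (Omega : Type) (m : nat) (x : nat -> Omega) : Prop :=
  forall i j, i < m -> j < m -> x i = x j -> i = j.

Definition m_transitive (Omega : Type) (act : gcar G -> Omega -> Omega) (m : nat)
  : Prop :=
  forall x y : nat -> Omega, distinct_tuple Omega m x -> distinct_tuple Omega m y ->
    exists g, forall i, i < m -> act g (x i) = y i.

(* td(G) < k, for k a natural number: every m such that G admits a faithful
   action transitive on ordered m-tuples of distinct points is < k
   (i.e. the supremum of such m is < k). *)
Definition td_lt (k : nat) : Prop :=
  forall (m : nat) (Omega : Type) (act : gcar G -> Omega -> Omega),
    is_action Omega act -> faithful Omega act -> m_transitive Omega act m -> m < k.

End FreeProduct.

(* Transpositions and the finitary alternating group Alt_f(Omega):
   products of an even number of transpositions. *)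
Definition is_transposition (Omega : Type) (s : Omega -> Omega) : Prop :=
  exists a b, a <> b /\ s a = b /\ s b = a /\
    forall x, x <> a -> x <> b -> s x = x.

Fixpoint compose_all (Omega : Type) (l : list (Omega -> Omega)) : Omega -> Omega :=
  match l with
  | [] => fun x => x
  | s :: l' => fun x => s (compose_all Omega l' x)
  end.

Definition in_Alt_f (Omega : Type) (sigma : Omega -> Omega) : Prop :=
  exists l : list (Omega -> Omega),
    Forall (is_transposition Omega) l /\ Nat.Even (length l) /\
    forall x, compose_all Omega l x = sigma x.

Definition contains_Alt_f (G : Group) : Prop :=
  exists (Omega : Type) (act : gcar G -> Omega -> Omega),
    infinite_type Omega /\ is_action G Omega act /\ faithful G Omega act /\
    forall sigma, in_Alt_f Omega sigma -> exists g, forall x, act g x = sigma x.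

From Stdlib Require Import List Arith Lia Classical ClassicalEpsilon.
Import ListNotations.

(* If the image of G contains Alt_f(Ω) for an infinite Ω, then G is
   k-transitive on Ω, so td(G) >= k.  Conversely, let G act faithfully and
   m-transitively with m >= k (Ω is then infinite because G is), and let u be
   a shortest, hence reduced, form of w, of length k.
   If some interior G-letter g of u has finite support, Neumann's lemma gives
   h fixing a point a of supp g and moving the rest of supp g off itself;
   then g and h g h^-1 have supports meeting only in a, so their commutator is
   a 3-cycle.  3-transitivity conjugates it to every 3-cycle, and these
   generate Alt_f(Ω).
   If every interior letter has infinite support, one prescribes t on at most
   k points, reading u letter by letter and always choosing a fresh point, so
   that the prescription is a partial injection along which u moves a point.
   m-transitivity realises it by some t, contradicting the mixed identity. *)

Lemma exists_not_In {T : Type} : infinite_type T -> forall l : list T, exists x, ~ In x l.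
Proof.
  intros Hinf l. apply NNPP. intro Hno. apply Hinf. exists l. intro x.
  apply NNPP. intro Hx. apply Hno. exists x. exact Hx.
Qed.

Lemma witness_list {A B : Type} (R : A -> B -> Prop) (C : list B) :
  exists LA : list A, forall b, In b C -> (exists a, R a b) -> exists a, In a LA /\ R a b.
Proof.
  induction C as [|c C [LA HLA]].
  - exists []. intros b [].
  - destruct (classic (exists a, R a c)) as [[a0 Ha0]|Hnone].
    + exists (a0 :: LA). intros b [<-|Hb] Hex.
      * exists a0. split; [left; reflexivity | exact Ha0].
      * destruct (HLA b Hb Hex) as [a [Ha HR]]. exists a. split; [right; exact Ha | exact HR].
    + exists LA. intros b [<-|Hb] Hex; [contradiction | exact (HLA b Hb Hex)].
Qed.

Lemma finite_type_of_injection {A B : Type} (f : A -> B) (C : list B) :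
  (forall a, In (f a) C) -> (forall a a', f a = f a' -> a = a') -> finite_type A.
Proof.
  intros HC Hinj. destruct (witness_list (fun a b => f a = b) C) as [LA HLA].
  exists LA. intro a.
  destruct (HLA (f a) (HC a) (ex_intro _ a eq_refl)) as [a' [Ha' E]].
  rewrite <- (Hinj a' a E). exact Ha'.
Qed.

Fixpoint lists_over {A : Type} (l : list A) (n : nat) : list (list A) :=
  match n with
  | 0 => [[]]
  | S n' => flat_map (fun a => map (cons a) (lists_over l n')) l
  end.

Lemma In_lists_over {A : Type} (l s : list A) n :
  incl s l -> length s = n -> In s (lists_over l n).
Proof.
  intros Hs <-. induction s as [|a s IH]; simpl; [left; reflexivity|].
  destruct (incl_cons_inv Hs) as [Ha Hs'].
  apply in_flat_map. exists a. split; [exact Ha | apply in_map, IH, Hs'].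
Qed.

Lemma extend_NoDup {T : Type} : infinite_type T -> forall n (l : list T),
  NoDup l -> length l <= n -> exists l', NoDup (l ++ l') /\ length (l ++ l') = n.
Proof.
  intros Hinf n. induction n as [|n IH]; intros l Hl Hlen.
  - exists []. rewrite app_nil_r. split; [exact Hl | lia].
  - destruct (Nat.eq_dec (length l) (S n)) as [E|E].
    { exists []. rewrite app_nil_r. split; [exact Hl | exact E]. }
    destruct (IH l Hl ltac:(lia)) as [l' [Hl' Hlen']].
    destruct (exists_not_In Hinf (l ++ l')) as [x Hx].
    exists (l' ++ [x]). rewrite app_assoc. split.
    + apply NoDup_app; [exact Hl' | repeat constructor; auto | ].
      intros a Ha [<-|[]]. exact (Hx Ha).
    + rewrite length_app, Hlen'. simpl. lia.
Qed.

Lemma NoDup3 {T : Type} (a b c : T) : a <> b -> b <> c -> c <> a -> NoDup [a; b; c].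
Proof. intros. repeat constructor; simpl; intuition congruence. Qed.

Definition pinj {T : Type} (P : list (T * T)) : Prop :=
  NoDup (map fst P) /\ NoDup (map snd P).

Definition maps {T : Type} (f : T -> T) (P : list (T * T)) : Prop :=
  forall q, In q P -> f (fst q) = snd q.

Definition points {T : Type} (P : list (T * T)) : list T := map fst P ++ map snd P.

(** * Finitary permutations *)

Section FinitaryPermutations.
Variable Omega : Type.

(* [is_transposition Omega t] unfolds to [exists a b, swaps t a b]. *)
Definition swaps (t : Omega -> Omega) (a b : Omega) : Prop :=
  a <> b /\ t a = b /\ t b = a /\ forall x, x <> a -> x <> b -> t x = x.

Definition is_3cycle (s : Omega -> Omega) (p q r : Omega) : Prop :=
  p <> q /\ q <> r /\ r <> p /\ s p = q /\ s q = r /\ s r = p /\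
  forall x, x <> p -> x <> q -> x <> r -> s x = x.

Definition transp (a b x : Omega) : Omega :=
  if excluded_middle_informative (x = a) then b
  else if excluded_middle_informative (x = b) then a else x.

Lemma transp_swaps a b : a <> b -> swaps (transp a b) a b.
Proof.
  intro Hab. unfold transp.
  repeat split; [exact Hab | ..]; intros;
    repeat destruct excluded_middle_informative; congruence.
Qed.

Lemma swaps_sym t a b : swaps t a b -> swaps t b a.
Proof.
  intros (Hab & ta & tb & tx).
  refine (conj (not_eq_sym Hab) (conj tb (conj ta _))).
  intros x Hb Ha. exact (tx x Ha Hb).
Qed.

Lemma swaps_involutive t a b : swaps t a b -> forall x, t (t x) = x.
Proof.
  intros (_ & ta & tb & tx) x.
  destruct (classic (x = a)) as [->|Hxa]; [now rewrite ta|].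
  destruct (classic (x = b)) as [->|Hxb]; [now rewrite tb|].
  rewrite (tx x Hxa Hxb). exact (tx x Hxa Hxb).
Qed.

Definition cycle3 (p q r x : Omega) : Omega := transp p r (transp p q x).

Lemma cycle3_is_3cycle p q r : p <> q -> q <> r -> r <> p -> is_3cycle (cycle3 p q r) p q r.
Proof.
  intros Npq Nqr Nrp. unfold cycle3.
  destruct (transp_swaps p q Npq) as (_ & Tq_p & Tq_q & Tq_o).
  destruct (transp_swaps p r (not_eq_sym Nrp)) as (_ & Tr_p & Tr_r & Tr_o).
  refine (conj Npq (conj Nqr (conj Nrp (conj _ (conj _ (conj _ _)))))).
  - rewrite Tq_p, Tr_o; congruence.
  - rewrite Tq_q, Tr_p. reflexivity.
  - rewrite Tq_o, Tr_r; congruence.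
  - intros x Np Nq Nr. rewrite Tq_o, Tr_o; auto.
Qed.

Lemma compose_all_app (l1 l2 : list (Omega -> Omega)) x :
  compose_all Omega (l1 ++ l2) x = compose_all Omega l1 (compose_all Omega l2 x).
Proof. induction l1 as [|t l1 IH]; simpl; congruence. Qed.

Lemma in_Alt_f_id : in_Alt_f Omega (fun x => x).
Proof.
  exists []. split; [constructor | split; [exists 0; reflexivity | reflexivity]].
Qed.

Lemma in_Alt_f_comp s s' :
  in_Alt_f Omega s -> in_Alt_f Omega s' -> in_Alt_f Omega (fun x => s (s' x)).
Proof.
  intros [l [Hl [[n Hn] Hs]]] [l' [Hl' [[n' Hn'] Hs']]].
  exists (l ++ l'). split; [apply Forall_app; split; assumption | split].
  - exists (n + n'). rewrite length_app. lia.
  - intro x. rewrite compose_all_app, Hs', Hs. reflexivity.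
Qed.

Lemma in_Alt_f_injective s : in_Alt_f Omega s -> forall x y, s x = s y -> x = y.
Proof.
  intros [l [Hl [_ Hs]]] x y E. rewrite <- !Hs in E. clear Hs.
  induction Hl as [|t l [a [b Ht]] Hl IH]; [exact E|].
  apply IH. simpl in E.
  rewrite <- (swaps_involutive t a b Ht (compose_all Omega l x)), E.
  apply (swaps_involutive t a b Ht).
Qed.

Lemma cycle3_in_Alt_f p q r : p <> q -> r <> p -> in_Alt_f Omega (cycle3 p q r).
Proof.
  intros Npq Nrp. exists [transp p r; transp p q]. split; [|split].
  - repeat constructor.
    + exists p, r. exact (transp_swaps p r (not_eq_sym Nrp)).
    + exists p, q. exact (transp_swaps p q Npq).
  - exists 1. reflexivity.
  - reflexivity.
Qed.

Lemma in_Alt_f_transitive_tuples : infinite_type Omega -> forall m (x y : nat -> Omega),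
  distinct_tuple Omega m x -> distinct_tuple Omega m y ->
  exists s, in_Alt_f Omega s /\ forall i, i < m -> s (x i) = y i.
Proof.
  intros Hinf m. unfold distinct_tuple. induction m as [|m IH]; intros x y Hx Hy.
  { exists (fun z => z). split; [exact in_Alt_f_id | intros i Hi; lia]. }
  destruct (IH x y) as [s [Hs Hsxy]]; [intros i j Hi Hj; first [apply Hx | apply Hy]; lia ..|].
  destruct (classic (s (x m) = y m)) as [E|Nm].
  { exists s. split; [exact Hs|]. intros i Hi.
    destruct (Nat.eq_dec i m) as [->|Nim]; [exact E | apply Hsxy; lia]. }
  destruct (exists_not_In Hinf (s (x m) :: map y (seq 0 (S m)))) as [f Hf].
  assert (Hfy : forall i, i <= m -> y i <> f).
  { intros i Hi E. apply Hf. right. rewrite <- E. apply in_map, in_seq. lia. }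
  assert (Hfs : f <> s (x m)) by (intro E; apply Hf; left; symmetry; exact E).
  destruct (cycle3_is_3cycle (s (x m)) (y m) f) as (_ & _ & _ & Hc & _ & _ & Ho);
    [exact Nm | exact (Hfy m (le_n m)) | exact Hfs |].
  exists (fun z => cycle3 (s (x m)) (y m) f (s z)). split.
  { apply in_Alt_f_comp; [apply cycle3_in_Alt_f | exact Hs]; assumption. }
  intros i Hi. destruct (Nat.eq_dec i m) as [->|Nim]; [exact Hc|].
  rewrite (Hsxy i) by lia. apply Ho.
  - intro E. apply Nim, Hx; [lia | lia |]. apply (in_Alt_f_injective s Hs).
    rewrite (Hsxy i) by lia. exact E.
  - intro E. apply Nim, Hy; [lia | lia | exact E].
  - apply Hfy. lia.
Qed.

Section GeneratedBy3Cycles.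
Variable K : (Omega -> Omega) -> Prop.
Hypothesis K_id : K (fun x => x).
Hypothesis K_comp : forall s s', K s -> K s' -> K (fun x => s (s' x)).
Hypothesis K_ext : forall s s', (forall x, s x = s' x) -> K s -> K s'.
Hypothesis K_3cycles :
  forall p q r, p <> q -> q <> r -> r <> p -> exists s, is_3cycle s p q r /\ K s.

Lemma swaps_comp_adjacent t1 t2 a b d :
  swaps t1 a b -> swaps t2 a d -> K (fun x => t1 (t2 x)).
Proof.
  intros (Nab & t1a & t1b & t1o) (Nad & t2a & t2d & t2o).
  destruct (classic (d = b)) as [->|Ndb].
  - apply (K_ext (fun x => x)); [|exact K_id]. intro x.
    destruct (classic (x = a)) as [->|Nxa]; [now rewrite t2a, t1b|].
    destruct (classic (x = b)) as [->|Nxb]; [now rewrite t2d, t1a|].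
    rewrite t2o, t1o; auto.
  - destruct (K_3cycles a d b) as [s [(_ & _ & _ & sa & sd & sb & so) Ks]]; auto.
    apply (K_ext s); [|exact Ks]. intro x.
    destruct (classic (x = a)) as [->|Nxa]; [rewrite sa, t2a, t1o; auto|].
    destruct (classic (x = d)) as [->|Nxd]; [rewrite sd, t2d, t1a; auto|].
    destruct (classic (x = b)) as [->|Nxb]; [rewrite sb, t2o, t1b; auto|].
    rewrite so, t2o, t1o; auto.
Qed.

Lemma swaps_comp t1 t2 a b c d : swaps t1 a b -> swaps t2 c d -> K (fun x => t1 (t2 x)).
Proof.
  intros T1 T2.
  destruct (classic (c = a)) as [->|Nca].
  { exact (swaps_comp_adjacent t1 t2 a b d T1 T2). }
  destruct (classic (c = b)) as [->|Ncb].
  { exact (swaps_comp_adjacent t1 t2 b a d (swaps_sym t1 a b T1) T2). }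
  destruct (classic (d = a)) as [->|Nda].
  { exact (swaps_comp_adjacent t1 t2 a b c T1 (swaps_sym t2 c a T2)). }
  destruct (classic (d = b)) as [->|Ndb].
  { exact (swaps_comp_adjacent t1 t2 b a c (swaps_sym t1 a b T1) (swaps_sym t2 c b T2)). }
  destruct T1 as (Nab & t1a & t1b & t1o), T2 as (Ncd & t2c & t2d & t2o).
  (* (a b)(c d) = (c a d)(a b c) *)
  destruct (K_3cycles c a d) as [z1 [(_ & _ & _ & z1c & z1a & z1d & z1o) K1]]; auto.
  destruct (K_3cycles a b c) as [z2 [(_ & _ & _ & z2a & z2b & z2c & z2o) K2]]; auto.
  apply (K_ext (fun x => z1 (z2 x))); [|exact (K_comp z1 z2 K1 K2)]. intro x.
  destruct (classic (x = a)) as [->|Nxa]; [rewrite z2a, z1o, t2o, t1a; auto|].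
  destruct (classic (x = b)) as [->|Nxb]; [rewrite z2b, z1c, t2o, t1b; auto|].
  destruct (classic (x = c)) as [->|Nxc]; [rewrite z2c, z1a, t2c, t1o; auto|].
  destruct (classic (x = d)) as [->|Nxd]; [rewrite z2o, z1d, t2d, t1o; auto|].
  rewrite z2o, z1o, t2o, t1o; auto.
Qed.

Lemma Alt_f_generated_by_3cycles sigma : in_Alt_f Omega sigma -> K sigma.
Proof.
  intros [l [Hl [[n Hn] Hsigma]]].
  apply (K_ext (compose_all Omega l)); [exact Hsigma|]. clear Hsigma.
  revert l Hl Hn. induction n as [|n IH]; intros l Hl Hn.
  - destruct l; [exact K_id | discriminate].
  - destruct l as [|t1 [|t2 l]]; simpl in Hn; try lia.
    inversion_clear Hl as [|? ? [a [b T1]] Hl'].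
    inversion_clear Hl' as [|? ? [c [d T2]] Hl''].
    exact (K_comp _ _ (swaps_comp t1 t2 a b c d T1 T2) (IH l Hl'' ltac:(lia))).
Qed.

End GeneratedBy3Cycles.
End FinitaryPermutations.

Section Words.
Variable G : Group.

Lemma eval_word_app tau (u v : word G) :
  eval_word G tau (u ++ v) = gmul G (eval_word G tau u) (eval_word G tau v).
Proof.
  induction u as [|a u IH]; simpl; [now rewrite gmul1l|].
  now rewrite IH, gmulA.
Qed.

Lemma eval_word_wequiv tau (u v : word G) :
  wequiv G u v -> eval_word G tau u = eval_word G tau v.
Proof.
  induction 1; try congruence; rewrite !eval_word_app; simpl.
  - now rewrite !gmul1r, gmulA.
  - now rewrite !gmul1l.
  - rewrite gmul1r. destruct b; simpl; now rewrite ?gmulVr, ?gmulVl, gmul1l.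
Qed.

Lemma mixed_identity_wequiv (w u : word G) :
  wequiv G w u -> mixed_identity G w -> mixed_identity G u.
Proof.
  intros Hwu Hw tau. rewrite <- (eval_word_wequiv tau w u Hwu). apply Hw.
Qed.

Definition reduced (u : word G) : Prop :=
  (forall u1 u2, u <> u1 ++ inl (gone G) :: u2) /\
  (forall u1 u2 g h, u <> u1 ++ inl g :: inl h :: u2) /\
  (forall u1 u2 b, u <> u1 ++ inr b :: inr (negb b) :: u2).

Lemma reduced_tail a u : reduced (a :: u) -> reduced u.
Proof.
  intros (H1 & H2 & H3). split; [|split].
  - intros u1 u2 E. apply (H1 (a :: u1) u2). now rewrite E.
  - intros u1 u2 g h E. apply (H2 (a :: u1) u2 g h). now rewrite E.
  - intros u1 u2 b E. apply (H3 (a :: u1) u2 b). now rewrite E.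
Qed.

Lemma reduced_of_shortest (w u : word G) :
  wequiv G w u -> (forall u', wequiv G w u' -> length u <= length u') -> reduced u.
Proof.
  intros Hwu Hmin.
  assert (Hshort : forall u', wequiv G u u' -> length u' < length u -> False).
  { intros u' Hu' Hlt. specialize (Hmin u' (wequiv_trans G w u u' Hwu Hu')). lia. }
  split; [|split].
  - intros u1 u2 ->. apply (Hshort (u1 ++ u2) (wequiv_one G u1 u2)).
    rewrite !length_app. simpl. lia.
  - intros u1 u2 g h ->. apply (Hshort _ (wequiv_mul G u1 u2 g h)).
    rewrite !length_app. simpl. lia.
  - intros u1 u2 b ->. apply (Hshort (u1 ++ u2) (wequiv_tt G u1 u2 b)).
    rewrite !length_app. simpl. lia.
Qed.

End Words.

Section Action.
Variables (G : Group) (Omega : Type) (act : gcar G -> Omega -> Omega).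
Hypothesis act_is_action : is_action G Omega act.

Lemma act_one x : act (gone G) x = x.
Proof. exact (proj1 act_is_action x). Qed.

Lemma act_mul g h x : act (gmul G g h) x = act g (act h x).
Proof. exact (proj2 act_is_action g h x). Qed.

Lemma act_inv_l g x : act (ginv G g) (act g x) = x.
Proof. now rewrite <- act_mul, gmulVl, act_one. Qed.

Lemma act_inv_r g x : act g (act (ginv G g) x) = x.
Proof. now rewrite <- act_mul, gmulVr, act_one. Qed.

Lemma act_inj g x y : act g x = act g y -> x = y.
Proof. intro E. now rewrite <- (act_inv_l g x), E, act_inv_l. Qed.

Lemma act_inv_fixed g x : act g x = x -> act (ginv G g) x = x.
Proof. intro E. rewrite <- E at 1. apply act_inv_l. Qed.

Lemma act_fixed_of_inv g x : act (ginv G g) x = x -> act g x = x.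
Proof. intro E. rewrite <- E at 1. apply act_inv_r. Qed.

Lemma act_moves_image g x : act g x <> x -> act g (act g x) <> act g x.
Proof. intros Hx E. exact (Hx (act_inj g _ _ E)). Qed.

Lemma act_inv_moves g x : act g x <> x -> act (ginv G g) x <> x.
Proof. intros Hx E. exact (Hx (act_fixed_of_inv g x E)). Qed.

Lemma act_moves_inv_image g x :
  act (ginv G g) x <> x -> act g (act (ginv G g) x) <> act (ginv G g) x.
Proof. rewrite act_inv_r. auto. Qed.

Lemma act_eval_cons tau a (u : word G) x :
  act (eval_word G tau (a :: u)) x = act (eval_letter G tau a) (act (eval_word G tau u) x).
Proof. apply act_mul. Qed.

Definition realized (s : Omega -> Omega) : Prop := exists g, forall x, act g x = s x.

Definition finitary (g : gcar G) : Prop := exists l : list Omega, forall x, act g x <> x -> In x l.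

Definition extends_pinj (n : nat) : Prop :=
  forall P : list (Omega * Omega), pinj P -> length P <= n -> exists g, maps (act g) P.

Lemma extends_pinj_le m n : m <= n -> extends_pinj n -> extends_pinj m.
Proof. intros Hmn Hn P HP HPm. apply Hn; [exact HP | lia]. Qed.

Lemma moves_of_faithful g : faithful G Omega act -> g <> gone G -> exists a, act g a <> a.
Proof.
  intros Hf Hg. apply NNPP. intro Hno. apply Hg, Hf. intro x. rewrite act_one.
  apply NNPP. intro Hx. apply Hno. exists x. exact Hx.
Qed.

Lemma infinite_of_faithful :
  faithful G Omega act -> infinite_type (gcar G) -> infinite_type Omega.
Proof.
  intros Hf HG [l Hl]. apply HG.
  apply (finite_type_of_injection (fun g => map (act g) l) (lists_over l (length l))).
  - intro g. apply In_lists_over; [intros y _; apply Hl | apply length_map].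
  - intros g h E. apply Hf. intro x. exact (proj1 map_ext_in_iff E x (Hl x)).
Qed.

Hypothesis Omega_infinite : infinite_type Omega.

Lemma extends_pinj_of_m_transitive m : m_transitive G Omega act m -> extends_pinj m.
Proof.
  intros Htr P [Hfst Hsnd] HPm.
  destruct (extend_NoDup Omega_infinite m (map fst P) Hfst) as [l1 [N1 L1]];
    [rewrite length_map; lia|].
  destruct (extend_NoDup Omega_infinite m (map snd P) Hsnd) as [l2 [N2 L2]];
    [rewrite length_map; lia|].
  destruct (exists_not_In Omega_infinite []) as [d _].
  destruct (Htr (fun i => nth i (map fst P ++ l1) d) (fun i => nth i (map snd P ++ l2) d))
    as [g Hg]; [intros i j Hi Hj; apply (NoDup_nth _ d); [assumption | lia | lia] ..|].
  exists g. intros q Hq. destruct (In_nth P q (d, d) Hq) as [i [Hi <-]].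
  specialize (Hg i ltac:(lia)).
  rewrite !app_nth1 in Hg by (rewrite length_map; lia).
  rewrite <- (map_nth fst P (d, d) i), <- (map_nth snd P (d, d) i). exact Hg.
Qed.

Lemma m_transitive_of_Alt_f_realized m :
  (forall sigma, in_Alt_f Omega sigma -> realized sigma) -> m_transitive G Omega act m.
Proof.
  intros HAlt x y Hx Hy.
  destruct (in_Alt_f_transitive_tuples Omega Omega_infinite m x y Hx Hy) as [s [Hs Hsxy]].
  destruct (HAlt s Hs) as [g Hg]. exists g. intros i Hi. rewrite Hg. exact (Hsxy i Hi).
Qed.

(** * A nontrivial finitary element yields Alt_f *)

Section Commutator.
Variables (s r : gcar G) (a : Omega).
Hypothesis s_moves_a : act s a <> a.
Hypothesis r_moves_a : act r a <> a.
Hypothesis supports_meet_in_a : forall x, act s x <> x -> act r x <> x -> x = a.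

Let s_fixes x : x <> a -> act r x <> x -> act s x = x.
Proof. intros Hxa Hrx. apply NNPP. intro Hsx. exact (Hxa (supports_meet_in_a x Hsx Hrx)). Qed.

Let r_fixes x : x <> a -> act s x <> x -> act r x = x.
Proof. intros Hxa Hsx. apply NNPP. intro Hrx. exact (Hxa (supports_meet_in_a x Hsx Hrx)). Qed.

Lemma commutator_fixes x : x <> a -> x <> act s a -> x <> act r a ->
  act (gmul G s (gmul G r (gmul G (ginv G s) (ginv G r)))) x = x.
Proof.
  intros Nxa Nxs Nxr. rewrite !act_mul.
  destruct (classic (act (ginv G r) x = x)) as [Erx|Nrx].
  - rewrite Erx. destruct (classic (act (ginv G s) x = x)) as [Esx|Nsx].
    + now rewrite Esx, (act_fixed_of_inv r x Erx), (act_fixed_of_inv s x Esx).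
    + assert (Hz : act (ginv G s) x <> a) by (intro E; apply Nxs; now rewrite <- E, act_inv_r).
      now rewrite (r_fixes _ Hz (act_moves_inv_image s x Nsx)), act_inv_r.
  - assert (Hy : act (ginv G r) x <> a) by (intro E; apply Nxr; now rewrite <- E, act_inv_r).
    rewrite (act_inv_fixed s _ (s_fixes _ Hy (act_moves_inv_image r x Nrx))), act_inv_r.
    apply s_fixes; [exact Nxa | intro E; exact (Nrx (act_inv_fixed r x E))].
Qed.

Lemma commutator_3cycle :
  is_3cycle Omega (act (gmul G s (gmul G r (gmul G (ginv G s) (ginv G r)))))
    a (act s a) (act r a).
Proof.
  pose proof (r_fixes _ s_moves_a (act_moves_image s a s_moves_a)) as r_sa.
  pose proof (s_fixes _ r_moves_a (act_moves_image r a r_moves_a)) as s_ra.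
  assert (Nsr : act s a <> act r a).
  { intro E. apply (act_moves_image r a r_moves_a). rewrite <- E at 1. now rewrite r_sa. }
  refine (conj (not_eq_sym s_moves_a) (conj Nsr (conj r_moves_a
    (conj _ (conj _ (conj _ commutator_fixes)))))); rewrite !act_mul.
  - pose proof (act_inv_moves r a r_moves_a) as Hy.
    now rewrite (act_inv_fixed s _ (s_fixes _ Hy (act_moves_inv_image r a Hy))), act_inv_r.
  - now rewrite (act_inv_fixed r _ r_sa), act_inv_l, s_ra.
  - pose proof (act_inv_moves s a s_moves_a) as Hz.
    now rewrite act_inv_l, (r_fixes _ Hz (act_moves_inv_image s a Hz)), act_inv_r.
Qed.

End Commutator.

Lemma stabilizer_transitive a x z : extends_pinj 2 -> x <> a -> z <> a ->
  exists c, act c a = a /\ act c x = z.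
Proof.
  intros Hext Hxa Hza.
  destruct (Hext [(a, a); (x, z)]) as [c Hc]; [| simpl; lia |].
  { split; simpl; repeat constructor; simpl; intuition congruence. }
  exists c. split; [apply (Hc (a, a)) | apply (Hc (x, z))]; simpl; auto.
Qed.

(* B. H. Neumann's lemma for the stabiliser of [a], phrased with forbidden
   pairs so that the induction on [X] goes through. *)
Lemma stabilizer_avoids_pairs a : extends_pinj 2 ->
  forall (X : list Omega) (L : list (Omega * Omega)), exists h, act h a = a /\
    forall q, In q L -> In (fst q) X -> fst q <> a -> act h (fst q) <> snd q.
Proof.
  intros Hext X. induction X as [|x X IH]; intro L.
  { exists (gone G). split; [apply act_one | intros q _ []]. }
  destruct (classic (x = a)) as [->|Hxa].
  { destruct (IH L) as [h [ha Hh]]. exists h. split; [exact ha|].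
    intros q Hq [E|HX] Hqa; [congruence | exact (Hh q Hq HX Hqa)]. }
  destruct (exists_not_In Omega_infinite (a :: map snd L)) as [z Hz].
  assert (Hza : z <> a) by (intro E; apply Hz; left; symmetry; exact E).
  destruct (stabilizer_transitive a x z Hext Hxa Hza) as [c [ca cx]].
  destruct (witness_list (fun d y => act d a = a /\ act d x = y) (map snd L)) as [D HD].
  (* if [h x] is forbidden, [c d^-1 h] (with [d x = h x]) is used instead, so
     [h] must also avoid the pairs that this substitution would hit *)
  destruct (IH (L ++ flat_map (fun d =>
      map (fun q => (fst q, act (gmul G d (ginv G c)) (snd q))) L) D)) as [h [ha Hh]].
  destruct (classic (In (x, act h x) L)) as [HxL|HxL].
  - destruct (HD (act h x) (in_map snd L _ HxL) (ex_intro _ h (conj ha eq_refl)))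
      as [d [HdD [da dx]]].
    exists (gmul G c (gmul G (ginv G d) h)).
    split; [now rewrite !act_mul, ha, (act_inv_fixed d a da), ca|].
    intros q Hq HX Hqa. rewrite !act_mul. destruct (classic (fst q = x)) as [->|Nq].
    + rewrite <- dx, act_inv_l, cx. intro E. apply Hz. right. rewrite E. exact (in_map snd L q Hq).
    + destruct HX as [E|HX]; [congruence|]. intro E.
      apply (Hh (fst q, act (gmul G d (ginv G c)) (snd q))); simpl; auto.
      * apply in_or_app. right. apply in_flat_map. exists d. split; [exact HdD|].
        apply in_map_iff. exists q. split; [reflexivity | exact Hq].
      * now rewrite <- E, act_mul, act_inv_l, act_inv_r.
  - exists h. split; [exact ha|]. intros q Hq HX Hqa E.
    destruct (classic (fst q = x)) as [Eq|Nq].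
    + apply HxL. rewrite <- Eq, E, <- surjective_pairing. exact Hq.
    + destruct HX as [E'|HX]; [congruence|].
      exact (Hh q (in_or_app _ _ _ (or_introl Hq)) HX Hqa E).
Qed.

Lemma stabilizer_moves_list_off a (l : list Omega) : extends_pinj 2 ->
  exists h, act h a = a /\ forall x, In x l -> x <> a -> ~ In (act h x) l.
Proof.
  intro Hext. destruct (stabilizer_avoids_pairs a Hext l (list_prod l l)) as [h [ha Hh]].
  exists h. split; [exact ha|]. intros x Hx Hxa Hhx.
  exact (Hh (x, act h x) (in_prod l l x _ Hx Hhx) Hx Hxa eq_refl).
Qed.

(* [h g h^-1] has support [h (supp g)], which meets [supp g] only in [a]. *)
Lemma finitary_3cycle g a : extends_pinj 2 -> finitary g -> act g a <> a ->
  exists y p q r, is_3cycle Omega (act y) p q r.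
Proof.
  intros Hext [l Hl] Hga.
  destruct (stabilizer_moves_list_off a l Hext) as [h [ha Hh]].
  assert (hia : act (ginv G h) a = a) by exact (act_inv_fixed h a ha).
  eexists. exists a, (act g a), (act (gmul G h (gmul G g (ginv G h))) a).
  apply commutator_3cycle; [exact Hga | |].
  - rewrite !act_mul, hia. intro E. apply Hga, (act_inj h). now rewrite E, ha.
  - intros x Hgx Hrx. rewrite !act_mul in Hrx.
    assert (Hgy : act g (act (ginv G h) x) <> act (ginv G h) x).
    { intro E. apply Hrx. now rewrite E, act_inv_r. }
    destruct (classic (act (ginv G h) x = a)) as [E|Nya].
    + now rewrite <- (act_inv_r h x), E.
    + exfalso. apply (Hh _ (Hl _ Hgy) Nya). rewrite act_inv_r. exact (Hl x Hgx).
Qed.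

Lemma conjugate_3cycle y h a b c : is_3cycle Omega (act y) a b c ->
  is_3cycle Omega (act (gmul G h (gmul G y (ginv G h)))) (act h a) (act h b) (act h c).
Proof.
  intros (Nab & Nbc & Nca & ya & yb & yc & yo).
  refine (conj _ (conj _ (conj _ (conj _ (conj _ (conj _ _))))));
    try (intro E; apply act_inj in E; contradiction); rewrite ?act_mul, ?act_inv_l.
  - now rewrite ya.
  - now rewrite yb.
  - now rewrite yc.
  - intros x Na Nb Nc. rewrite !act_mul, yo, act_inv_r; [reflexivity | ..];
      intro E; [apply Na | apply Nb | apply Nc]; now rewrite <- E, act_inv_r.
Qed.

Lemma all_3cycles_realized y a b c : extends_pinj 3 -> is_3cycle Omega (act y) a b c ->
  forall p q r, p <> q -> q <> r -> r <> p -> exists s, is_3cycle Omega s p q r /\ realized s.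
Proof.
  intros Hext Hy p q r Npq Nqr Nrp. pose proof Hy as (Nab & Nbc & Nca & _).
  destruct (Hext [(a, p); (b, q); (c, r)]) as [h Hh]; [split; apply NoDup3; auto | simpl; lia |].
  change p with (snd (a, p)); change q with (snd (b, q)); change r with (snd (c, r)).
  rewrite <- (Hh (a, p)), <- (Hh (b, q)), <- (Hh (c, r)) by (simpl; auto).
  eexists. split; [apply conjugate_3cycle, Hy | eexists; reflexivity].
Qed.

Lemma Alt_f_realized_of_finitary g a : extends_pinj 3 -> finitary g -> act g a <> a ->
  forall sigma, in_Alt_f Omega sigma -> realized sigma.
Proof.
  intros Hext Hg Hga.
  destruct (finitary_3cycle g a (extends_pinj_le 2 3 ltac:(lia) Hext) Hg Hga)
    as (y & a' & b & c & Hy).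
  apply Alt_f_generated_by_3cycles.
  - exists (gone G). exact act_one.
  - intros s s' [g1 H1] [g2 H2]. exists (gmul G g1 g2). intro x. now rewrite act_mul, H2, H1.
  - intros s s' E [g1 H1]. exists g1. intro x. now rewrite H1.
  - exact (all_3cycles_realized y a' b c Hext Hy).
Qed.

(** * Words whose interior letters have infinite support *)

(* The requirement [t^b c = p], recorded as a pair on the graph of [t]. *)
Definition step_pair (b : bool) (c p : Omega) : Omega * Omega := if b then (c, p) else (p, c).

Lemma act_letter_step_pair tau b c p P :
  maps (act tau) (step_pair b c p :: P) -> act (eval_letter G tau (inr b)) c = p.
Proof.
  intro H. specialize (H _ (or_introl eq_refl)).
  destruct b; simpl in *; [exact H | rewrite <- H; apply act_inv_l].
Qed.

Lemma points_step_pair b c p P L : incl (points P) L -> In c L ->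
  incl (points (step_pair b c p :: P)) (p :: L).
Proof.
  unfold points. intros HPL HcL y Hy. simpl.
  destruct b; simpl in Hy; rewrite in_app_iff in *; simpl in Hy;
    intuition (subst; auto using in_or_app).
Qed.

Lemma side_incl_points (b : bool) (P : list (Omega * Omega)) :
  incl (map (if b then fst else snd) P) (points P).
Proof. destruct b; intros y Hy; apply in_or_app; auto. Qed.

Lemma side_step_pair (b : bool) c p P :
  map (if b then fst else snd) (step_pair b c p :: P) = c :: map (if b then fst else snd) P.
Proof. destruct b; reflexivity. Qed.

Lemma pinj_step_pair (b : bool) c p (P : list (Omega * Omega)) : pinj P ->
  ~ In c (map (if b then fst else snd) P) -> ~ In p (points P) -> pinj (step_pair b c p :: P).
Proof.
  intros [Hfst Hsnd] Hc Hp. unfold points in Hp. rewrite in_app_iff in Hp.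
  destruct b; split; simpl; constructor; tauto.
Qed.

(* A trail for [v] toward the letter [t^b]: starting from [x], every [tau]
   respecting the partial injection [P] carries [x] along [v] to [c], and [c]
   is still free on the side of [P] that [t^b] will constrain.  [L] bounds all
   points used so far. *)
Record trail (b : bool) (v : word G) (x c : Omega) (P : list (Omega * Omega))
    (L : list Omega) : Prop := {
  trail_pinj : pinj P;
  trail_points : incl (points P) L;
  trail_end : In c L;
  trail_free : ~ In c (map (if b then fst else snd) P);
  trail_length : length P <= length v;
  trail_eval : forall tau, maps (act tau) P -> act (eval_word G tau v) x = c }.

Lemma trail_nil b x : trail b [] x x [] [x].
Proof.
  constructor; simpl; auto.
  - split; constructor.
  - apply incl_nil_l.
  - intros tau _. apply act_one.
Qed.

Lemma trail_letter b g x : trail b [inl g] x (act g x) [] [act g x].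
Proof.
  constructor; simpl; auto.
  - split; constructor.
  - apply incl_nil_l.
  - intros tau _. now rewrite act_mul, act_one.
Qed.

Lemma trail_push_t b v x c P L : trail b v x c P L ->
  exists p, trail b (inr b :: v) x p (step_pair b c p :: P) (p :: L).
Proof.
  intros [HP HPL HcL Hc Hlen Heval].
  destruct (exists_not_In Omega_infinite L) as [p Hp].
  exists p. constructor.
  - apply pinj_step_pair; [exact HP | exact Hc | intro Hin; exact (Hp (HPL p Hin))].
  - exact (points_step_pair b c p P L HPL HcL).
  - left. reflexivity.
  - rewrite side_step_pair. intros [E|Hin].
    + apply Hp. rewrite <- E. exact HcL.
    + exact (Hp (HPL p (side_incl_points b P p Hin))).
  - simpl. lia.
  - intros tau Htau. rewrite act_eval_cons, (Heval tau (fun q Hq => Htau q (or_intror Hq))).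
    exact (act_letter_step_pair tau b c p P Htau).
Qed.

(* The infinite support of [g] provides a fresh [p] whose image [g p] is fresh too. *)
Lemma trail_push_letter b b' g v x c P L : ~ finitary g -> trail b' v x c P L ->
  exists p, trail b (inl g :: inr b' :: v) x (act g p) (step_pair b' c p :: P)
    (act g p :: p :: L).
Proof.
  intros Hg [HP HPL HcL Hc Hlen Heval].
  assert (Hp : exists p, ~ In p L /\ ~ In (act g p) L /\ act g p <> p).
  { apply NNPP. intro Hno. apply Hg. exists (L ++ map (act (ginv G g)) L).
    intros z Hz. apply in_or_app.
    destruct (classic (In z L)) as [HzL|HzL]; [left; exact HzL | right].
    destruct (classic (In (act g z) L)) as [HgzL|HgzL].
    - rewrite <- (act_inv_l g z). exact (in_map _ L _ HgzL).
    - exfalso. apply Hno. exists z. auto. }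
  destruct Hp as [p [HpL [HgpL Hgp]]].
  exists p. constructor.
  - apply pinj_step_pair; [exact HP | exact Hc | intro Hin; exact (HpL (HPL p Hin))].
  - apply incl_tl. exact (points_step_pair b' c p P L HPL HcL).
  - left. reflexivity.
  - intro Hin.
    destruct (points_step_pair b' c p P L HPL HcL _ (side_incl_points b _ _ Hin)) as [E|HinL].
    + exact (Hgp (eq_sym E)).
    + exact (HgpL HinL).
  - simpl. lia.
  - intros tau Htau.
    rewrite !act_eval_cons, (Heval tau (fun q Hq => Htau q (or_intror Hq))).
    rewrite (act_letter_step_pair tau b' c p P Htau). reflexivity.
Qed.

Definition interior_infinite (u : word G) : Prop :=
  forall l1 l2 g, u = l1 ++ inl g :: l2 -> l1 <> [] -> l2 <> [] -> ~ finitary g.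

Lemma interior_infinite_tail a u : interior_infinite (a :: u) -> interior_infinite u.
Proof.
  intros H l1 l2 g E N1 N2. apply (H (a :: l1) l2 g); [now rewrite E | discriminate | exact N2].
Qed.

Lemma finitary_interior_letter u : reduced G u -> ~ interior_infinite u ->
  3 <= length u /\ exists g, g <> gone G /\ finitary g.
Proof.
  intros Hred Hint. apply NNPP. intro Hno. apply Hint.
  intros l1 l2 g E N1 N2 Hg. apply Hno. split.
  - rewrite E, length_app. destruct l1; [congruence|]. destruct l2; [congruence|]. simpl. lia.
  - exists g. split; [intros ->; exact (proj1 Hred l1 l2 E) | exact Hg].
Qed.

Lemma trail_exists b v : reduced G (inr b :: v) -> interior_infinite (inr b :: v) ->
  exists x c P L, trail b v x c P L.
Proof.
  remember (length v) as n eqn:Hn. revert b v Hn.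
  induction n as [n IH] using lt_wf_ind. intros b v Hn Hred Hint.
  destruct (exists_not_In Omega_infinite []) as [x _].
  destruct v as [|[g|b'] v].
  - exists x, x, [], [x]. apply trail_nil.
  - destruct v as [|[h|b'] v].
    + exists x, (act g x), [], [act g x]. apply trail_letter.
    + exfalso. exact (proj1 (proj2 Hred) [inr b] v g h eq_refl).
    + destruct (IH (length v) ltac:(simpl in Hn; lia) b' v eq_refl) as (x' & c & P & L & Ht).
      { exact (reduced_tail G _ _ (reduced_tail G _ _ Hred)). }
      { exact (interior_infinite_tail _ _ (interior_infinite_tail _ _ Hint)). }
      destruct (trail_push_letter b b' g v x' c P L) as [p Hp]; [|exact Ht|eauto].
      apply (Hint [inr b] (inr b' :: v) g eq_refl); discriminate.
  - assert (b' = b) as ->.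
    { destruct Hred as (_ & _ & Htt). destruct b, b'; auto; exfalso; exact (Htt [] v _ eq_refl). }
    destruct (IH (length v) ltac:(simpl in Hn; lia) b v eq_refl) as (x' & c & P & L & Ht).
    { exact (reduced_tail G _ _ Hred). }
    { exact (interior_infinite_tail _ _ Hint). }
    destruct (trail_push_t b v x' c P L Ht) as [p Hp]. eauto.
Qed.

Lemma trail_endpoint_avoids b v x c P L : trail b v x c P L ->
  extends_pinj (S (length v)) ->
  forall K : list Omega, exists tau, ~ In (act (eval_word G tau (inr b :: v)) x) K.
Proof.
  intros [HP HPL HcL Hc Hlen Heval] Hext K.
  destruct (exists_not_In Omega_infinite (L ++ K)) as [p Hp].
  destruct (Hext (step_pair b c p :: P)) as [tau Htau]; [| simpl; lia |].
  { apply pinj_step_pair; [exact HP | exact Hc |].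
    intro Hin. apply Hp, in_or_app. left. exact (HPL p Hin). }
  exists tau. rewrite act_eval_cons, (Heval tau (fun q Hq => Htau q (or_intror Hq))).
  rewrite (act_letter_step_pair tau b c p P Htau).
  intro Hin. apply Hp, in_or_app. right. exact Hin.
Qed.

Lemma not_mixed_identity u : extends_pinj (length u) -> reduced G u ->
  interior_infinite u -> u <> [] -> ~ mixed_identity G u.
Proof.
  intros Hext Hred Hint Hne Hid.
  assert (Hfix : forall tau x, act (eval_word G tau u) x = x)
    by (intros tau x; rewrite Hid; apply act_one).
  destruct u as [|[g|b] v]; [contradiction | destruct v as [|[h|b] v] |].
  - apply (proj1 Hred [] []). specialize (Hid (gone G)). simpl in Hid.
    rewrite gmul1r in Hid. now rewrite Hid.
  - exact (proj1 (proj2 Hred) [] v g h eq_refl).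
  - assert (Hext' : extends_pinj (S (length v)))
      by exact (extends_pinj_le _ _ (le_S _ _ (le_n _)) Hext).
    destruct (trail_exists b v (reduced_tail G _ _ Hred) (interior_infinite_tail _ _ Hint))
      as (x & c & P & L & Ht).
    destruct (trail_endpoint_avoids b v x c P L Ht Hext' [act (ginv G g) x]) as [tau Htau].
    apply Htau. left. apply (act_inj g). rewrite act_inv_r.
    specialize (Hfix tau x). rewrite act_eval_cons in Hfix. symmetry. exact Hfix.
  - destruct (trail_exists b v Hred Hint) as (x & c & P & L & Ht).
    destruct (trail_endpoint_avoids b v x c P L Ht Hext [x]) as [tau Htau].
    apply Htau. left. symmetry. apply Hfix.
Qed.

End Action.

Theorem propositionA1 (G : Group) (w : word G) (k : nat) :
  infinite_type (gcar G) ->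
  nontrivial G w ->
  mixed_identity G w ->
  word_length G w k ->
  (contains_Alt_f G /\ ~ td_lt G k) \/ (~ contains_Alt_f G /\ td_lt G k).
Proof.
  intros HG Hnt Hw [[u [Hwu <-]] Hmin].
  assert (Hred : reduced G u) by exact (reduced_of_shortest G w u Hwu Hmin).
  assert (Hu : mixed_identity G u) by exact (mixed_identity_wequiv G w u Hwu Hw).
  assert (Hne : u <> []) by (intros ->; exact (Hnt Hwu)).
  destruct (classic (contains_Alt_f G)) as [HAlt|HnAlt]; [left | right];
    split; try assumption.
  - intro Htd. destruct HAlt as (Omega & act & HOmega & Hact & Hf & HAlt).
    pose proof (Htd (length u) Omega act Hact Hf
      (m_transitive_of_Alt_f_realized G Omega act HOmega _ HAlt)).
    lia.
  - intros m Omega act Hact Hf Htr. apply Nat.nle_gt. intro Hum.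
    pose proof (infinite_of_faithful G Omega act Hf HG) as HOmega.
    pose proof (extends_pinj_of_m_transitive G Omega act HOmega m Htr) as Hext.
    destruct (classic (interior_infinite G Omega act u)) as [Hint|Hint].
    + exact (not_mixed_identity G Omega act Hact HOmega u
        (extends_pinj_le G Omega act _ _ Hum Hext) Hred Hint Hne Hu).
    + destruct (finitary_interior_letter G Omega act u Hred Hint) as [H3 [g [Hg1 Hg]]].
      destruct (moves_of_faithful G Omega act Hact g Hf Hg1) as [a Ha].
      apply HnAlt. exists Omega, act. refine (conj HOmega (conj Hact (conj Hf _))).
      exact (Alt_f_realized_of_finitary G Omega act Hact HOmega g a
        (extends_pinj_le G Omega act 3 m ltac:(lia) Hext) Hg Ha).
Qed.
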